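(* Let $m=2$, $\mu = (\mu_1,\mu_2)^\top\in\mathbb{R}^2$, and let $M = \begin{bmatrix} M_{11} & M_{12}\\ M_{12} & M_{22}\end{bmatrix}$ be a symmetric positive semidefinite matrix that is row-stochastic (non-negative entries, each row summing to $1$). Let $z\sim\mathcal{N}(\mu, M)$ and $p = (p_1,p_2) := \mathrm{softmax}(z)$. Let $q' = (1,0)^\top$ and $p' := M^\top q' = (M_{11}, M_{12})^\top$. Define $\alpha_{\mathrm{TLI}} := \min\{p_1,1\} + \min\{p_2, 0\}$ and $\alpha_{\mathrm{RDK}} := \min\{p_1, p'_1\} + \min\{p_2, p'_2\}$. Assume $\mu_1 + 3\sqrt{M_{11}} \le \mu_2 - 3\sqrt{M_{22}}$. Then, with probability at least $99.46\%$ over $z$, \[ \alpha_{\mathrm{TLI}} \le \alpha_{\mathrm{RDK}} . \]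
   Context: $\mathrm{softmax}(z)_i = \exp(z_i)/(\exp(z_1)+\exp(z_2))$. Here $\alpha_{\mathrm{TLI}}$ is the acceptance rate $\sum_x \min\{p(x), q'(x)\}$ between $p$ and the TLI drafter $q'$, and $\alpha_{\mathrm{RDK}}$ is the acceptance rate between $p$ and the redistributed drafter $p'$. *)

From HB Require Import structures.
From mathcomp Require Import all_boot all_order all_algebra.
From mathcomp Require Import all_classical all_reals all_analysis.
Set Implicit Arguments. Unset Strict Implicit. Unset Printing Implicit Defensive.
Import Order.TTheory GRing.Theory Num.Theory.
Local Open Scope ring_scope.

Definition softmax1 {R : realType} (z1 z2 : R) : R := expR z1 / (expR z1 + expR z2).
Definition softmax2 {R : realType} (z1 z2 : R) : R := expR z2 / (expR z1 + expR z2).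

Definition std_gauss2 {R : realType} : set (R * R) -> \bar R :=
  ((normal_prob (0:R) 1) \x (normal_prob (0:R) 1))%E.

(* On the event z1 <= z2 the softmax puts mass p1 <= 1/2 on the first token, while
   positive semidefiniteness and row-stochasticity force M22 = M11 >= 1/2.  There
   alpha_TLI = p1 = min(p1, M11) <= alpha_RDK.  The complementary event is the tail
   event c . g >= mu2 - mu1 of the standard Gaussian g, where c is the difference of
   the rows of the Cholesky factor, |c|^2 = 2 (2 M11 - 1).  Since mu2 - mu1 >= 6 sqrt M11,
   the Chernoff bound with parameter 3 gives this event probability at most
   exp(-9) < 0.0054. *)

From HB Require Import structures.
From mathcomp Require Import all_boot all_order all_algebra.
From mathcomp Require Import all_classical all_reals all_analysis.
From mathcomp Require Import measurable_realfun ring lra.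
Import Order.TTheory GRing.Theory Num.Theory.
Local Open Scope ring_scope.
Local Open Scope classical_set_scope.

Definition acceptance {R : realType} (p1 p2 q1 q2 : R) : R :=
  Order.min p1 q1 + Order.min p2 q2.

Section softmax.
Context {R : realType}.
Implicit Types u v : R.

Lemma softmax2E u v : softmax2 u v = softmax1 v u.
Proof. by rewrite /softmax1 /softmax2 addrC. Qed.

Lemma softmax1_ge0 u v : 0 <= softmax1 u v.
Proof. by rewrite /softmax1 divr_ge0 ?expR_ge0// ltW ?addr_gt0 ?expR_gt0. Qed.

Lemma softmax1_le_half [u v : R] : u <= v -> softmax1 u v <= 1 / 2.
Proof.
move=> uv; have := expR_gt0 u; have : expR u <= expR v by rewrite ler_expR.
rewrite /softmax1 ler_pdivrMr ?addr_gt0 ?expR_gt0//; lra.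
Qed.

Lemma softmax1_expR_ln u v : softmax1 u v = expR (u - ln (expR u + expR v)).
Proof. by rewrite /softmax1 expRD expRN lnK// posrE addr_gt0 ?expR_gt0. Qed.

Lemma measurable_softmax1 d (T : measurableType d) (f g : T -> R) :
  measurable_fun setT f -> measurable_fun setT g ->
  measurable_fun setT (fun x => softmax1 (f x) (g x)).
Proof.
move=> mf mg; under eq_fun do rewrite softmax1_expR_ln.
apply: measurableT_comp; first exact: measurable_expR.
apply: measurable_funB => //; apply: measurableT_comp; first exact: measurable_ln.
by apply: measurable_funD; apply: measurableT_comp => //; exact: measurable_expR.
Qed.

End softmax.

Section acceptance.
Context {R : realType}.

Lemma acceptance_point_mass_le (p1 p2 a b : R) :
  p1 <= 1 -> 0 <= p2 -> p1 <= a -> 0 <= b ->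
  acceptance p1 p2 1 0 <= acceptance p1 p2 a b.
Proof.
move=> p11 p20 p1a b0.
by rewrite /acceptance (min_l p11) (min_r p20) (min_l p1a) addr0 lerDl le_min p20.
Qed.

Lemma softmax_acceptance_point_mass_le (u v a b : R) :
  u <= v -> 1 / 2 <= a -> 0 <= b ->
  acceptance (softmax1 u v) (softmax2 u v) 1 0 <=
  acceptance (softmax1 u v) (softmax2 u v) a b.
Proof.
move=> /softmax1_le_half p1_le_half a_ge b_ge0.
apply: acceptance_point_mass_le => //; first lra.
  by rewrite softmax2E softmax1_ge0.
exact: le_trans a_ge.
Qed.

Lemma measurable_softmax_acceptance_le d (T : measurableType d) (f g : T -> R)
    (q1 q2 r1 r2 : R) :
  measurable_fun setT f -> measurable_fun setT g ->
  measurable [set x | acceptance (softmax1 (f x) (g x)) (softmax2 (f x) (g x)) q1 q2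
                      <= acceptance (softmax1 (f x) (g x)) (softmax2 (f x) (g x)) r1 r2].
Proof.
move=> mf mg.
have m1 : measurable_fun setT (fun x => softmax1 (f x) (g x)).
  exact: measurable_softmax1.
have m2 : measurable_fun setT (fun x => softmax2 (f x) (g x)).
  by under eq_fun do rewrite softmax2E; exact: measurable_softmax1.
rewrite -[X in measurable X]setTI.
by apply: measurable_fun_ler => //; apply: measurable_funD; apply: measurable_minr.
Qed.

End acceptance.

Section gaussian.
Context {R : realType}.
Local Open Scope ereal_scope.
Notation mu := (@lebesgue_measure R).

Lemma ge0_integral_normal_prob (m s : R) (f : R -> \bar R) :
  (forall x, 0 <= f x) -> measurable_fun [set: R] f ->
  \int[normal_prob m s]_x f x = \int[mu]_x (f x * (normal_pdf m s x)%:E).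
Proof.
move=> f0 mf.
have ms := normal_prob_dominates m s.
rewrite -(Radon_Nikodym_SigmaFinite.change_of_variables ms)//.
apply: ae_eq_integral => //.
- apply: emeasurable_funM => //.
  exact: measurable_int (Radon_Nikodym_SigmaFinite.f_integrable ms).
- by apply: emeasurable_funM => //; apply/measurable_EFinP; exact: measurable_normal_pdf.
- apply: ae_eqe_mul2l; apply: integral_ae_eq => //.
  + exact: Radon_Nikodym_SigmaFinite.f_integrable ms.
  + by apply/measurable_EFinP; exact: measurable_normal_pdf.
  + by move=> E _ mE; rewrite -Radon_Nikodym_SigmaFinite.f_integral.
Qed.

Lemma measurable_EFin_expRM (b : R) :
  measurable_fun [set: R] (fun x => (expR (b * x))%:E).
Proof.
apply/measurable_EFinP; apply: measurableT_comp; first exact: measurable_expR.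
exact: measurable_funM.
Qed.

Lemma normal_mgf (m s b : R) : s != 0%R ->
  \int[normal_prob m s]_x (expR (b * x))%:E =
  (expR (b * m + b ^+ 2 * s ^+ 2 / 2))%:E.
Proof.
move=> s0.
rewrite ge0_integral_normal_prob; last 2 first.
- by move=> x; rewrite lee_fin expR_ge0.
- exact: measurable_EFin_expRM.
(* completing the square in the exponent shifts the mean by [b s^2] *)
transitivity (\int[mu]_x ((expR (b * m + b ^+ 2 * s ^+ 2 / 2))%:E *
                          (normal_pdf (m + b * s ^+ 2) s x)%:E)).
  apply: eq_integral => x _; rewrite -!EFinM; congr EFin.
  rewrite /normal_pdf (negbTE s0) /normal_fun mulrCA [RHS]mulrCA.
  by congr (_ * _)%R; rewrite -!expRD; congr expR; field.
rewrite ge0_integralZl //.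
- by rewrite integral_normal_pdf mule1.
- by apply/measurable_EFinP; exact: measurable_normal_pdf.
- by move=> x _; rewrite lee_fin normal_pdf_ge0.
Qed.

Lemma measurable_linear_form (a b : R) :
  measurable_fun [set: R * R] (fun g => a * g.1 + b * g.2)%R.
Proof. by apply: measurable_funD; apply: measurable_funM. Qed.

Lemma measurable_affine_form (m a b : R) :
  measurable_fun [set: R * R] (fun g => m + a * g.1 + b * g.2)%R.
Proof.
under eq_fun do rewrite -addrA.
by apply: measurable_funD => //; exact: measurable_linear_form.
Qed.

Lemma std_normal_mgf (b : R) :
  \int[normal_prob 0 1]_x (expR (b * x))%:E = (expR (b ^+ 2 / 2))%:E.
Proof. by rewrite normal_mgf ?oner_eq0// mulr0 add0r expr1n mulr1. Qed.

Lemma std_gauss2_mgf (a b : R) :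
  \int[(normal_prob 0 1 \x normal_prob 0 1)]_g (expR (a * g.1 + b * g.2))%:E =
  (expR ((a ^+ 2 + b ^+ 2) / 2))%:E.
Proof.
rewrite fubini_tonelli1; last 2 first.
- apply/measurable_EFinP; apply: measurableT_comp; first exact: measurable_expR.
  exact: measurable_linear_form.
- by move=> g; rewrite lee_fin expR_ge0.
transitivity (\int[normal_prob 0 1]_x
                ((expR (b ^+ 2 / 2))%:E * (expR (a * x))%:E)).
  apply: eq_integral => x _; rewrite /fubini_F /=.
  under eq_integral do rewrite expRD EFinM.
  rewrite ge0_integralZl//; last exact: measurable_EFin_expRM.
  by rewrite std_normal_mgf muleC.
rewrite ge0_integralZl//; last exact: measurable_EFin_expRM.
by rewrite std_normal_mgf -EFinM -expRD -mulrDl addrC.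
Qed.

Lemma std_gauss2_linear_tail (a b c t : R) : (0 < t)%R ->
  std_gauss2 [set g | c <= a * g.1 + b * g.2]%R <=
  (expR (t ^+ 2 * (a ^+ 2 + b ^+ 2) / 2 - t * c))%:E.
Proof.
move=> t0.
have mX : (fun g : measurableTypeR R * measurableTypeR R => a * g.1 + b * g.2)%R \in mfun.
  by rewrite inE; exact: measurable_linear_form.
apply: le_trans (@chernoff _ _ _ std_gauss2 (mfun_Sub mX) _ c t0) _.
rewrite /mmt_gen_fun expectation_def /=.
under eq_integral => g _ do rewrite mulrDl !(mulrAC _ _ t).
rewrite std_gauss2_mgf -EFinM -expRD lee_fin ler_expR !exprMn.
lra.
Qed.

Lemma std_gauss2_linear_tail_expRN9 (a b c : R) :
  (3 * (a ^+ 2 + b ^+ 2) / 2 + 3 <= c)%R ->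
  std_gauss2 [set g | c <= a * g.1 + b * g.2]%R <= (expR (-9))%:E.
Proof.
move=> c_ge; apply: le_trans (std_gauss2_linear_tail a b c 3 _) _ => //.
by rewrite lee_fin ler_expR; lra.
Qed.

End gaussian.

Section real_bounds.
Context {R : realType}.

Lemma stochastic_psd2_diag_ge_half (M11 M12 M22 : R) :
  M11 + M12 = 1 -> M12 + M22 = 1 ->
  (forall x1 x2 : R, 0 <= x1 * (M11 * x1 + M12 * x2) + x2 * (M12 * x1 + M22 * x2)) ->
  1 / 2 <= M11.
Proof. by move=> row1 row2 /(_ 1 (-1)); lra. Qed.

Lemma expRN9_le : expR (-9) <= 54 / 10000 :> R.
Proof.
have e9 : 200 <= expR 9 :> R.
  have := @expR_ge1Dxn R 9 3 (ler0n _ 9).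
  by rewrite (_ : (3.+1)`!%:R = 24 :> R) //; lra.
have : expR (-9) * expR 9 = 1 :> R by rewrite -expRD addNr expR0.
have := expR_gt0 (-9 : R); nra.
Qed.

End real_bounds.

Section probability_bound.
Context {R : realType}.
Local Open Scope ereal_scope.

Lemma probability_ge_setC_subset d (T : measurableType d) (P : probability T R)
    (A E : set T) (p : R) :
  measurable A -> measurable E -> ~` A `<=` E -> P A <= p%:E ->
  (1 - p)%:E <= P E.
Proof.
move=> mA mE AE PA.
apply: (@le_trans _ _ (P (~` A))).
  by rewrite (probability_setC P mA) EFinB leeB.
by apply: le_measure AE; rewrite inE//; exact: measurableC.
Qed.

End probability_bound.

Theorem theorem3 (R : realType) (mu1 mu2 M11 M12 M22 : R)
  (l11 l12 l21 l22 : R) :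
  0 <= M11 -> 0 <= M12 -> 0 <= M22 ->
  M11 + M12 = 1 -> M12 + M22 = 1 ->
  (forall x1 x2 : R, 0 <= x1 * (M11 * x1 + M12 * x2) + x2 * (M12 * x1 + M22 * x2)) ->
  l11 * l11 + l12 * l12 = M11 ->
  l11 * l21 + l12 * l22 = M12 ->
  l21 * l21 + l22 * l22 = M22 ->
  mu1 + 3 * Num.sqrt M11 <= mu2 - 3 * Num.sqrt M22 ->
  ((9946 / 10000)%:E <=
    std_gauss2 [set g : R * R |
      (      let z1 := mu1 + l11 * g.1 + l12 * g.2 in
      let z2 := mu2 + l21 * g.1 + l22 * g.2 in
      let p1 := softmax1 z1 z2 in
      let p2 := softmax2 z1 z2 in
      Order.min p1 1 + Order.min p2 0 <= Order.min p1 M11 + Order.min p2 M12)%R])%E.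
Proof.
move=> _ M12_ge0 _ row1 row2 psd LL11 LL12 LL22 mu_sep.
have M11_ge_half : 1 / 2 <= M11 by apply: stochastic_psd2_diag_ge_half psd.
have M22E : M22 = M11 by lra.
set r := Num.sqrt M11.
have r_ge0 : 0 <= r := sqrtr_ge0 M11.
have r2E : r ^+ 2 = M11 by rewrite sqr_sqrtr//; lra.
have M11_le_r : M11 <= r by rewrite -r2E; nra.
set c1 := l11 - l21; set c2 := l12 - l22; set D := mu2 - mu1.
have c_norm : c1 ^+ 2 + c2 ^+ 2 = 2 * (2 * M11 - 1) by rewrite /c1 /c2; nra.
have D_ge : 6 * r <= D by move: mu_sep; rewrite M22E -/r /D; lra.
set B := [set g : R * R | D <= c1 * g.1 + c2 * g.2].
have PB : (std_gauss2 B <= (54 / 10000)%:E)%E.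
  apply: le_trans (std_gauss2_linear_tail_expRN9 c1 c2 D _) _; first lra.
  by rewrite lee_fin expRN9_le.
have -> : 9946 / 10000 = 1 - 54 / 10000 :> R by lra.
pose z1 (g : measurableTypeR R * measurableTypeR R) := mu1 + l11 * g.1 + l12 * g.2.
pose z2 (g : measurableTypeR R * measurableTypeR R) := mu2 + l21 * g.1 + l22 * g.2.
apply: probability_ge_setC_subset PB.
- rewrite -[X in measurable X]setTI.
  by apply: measurable_fun_ler => //; exact: measurable_linear_form.
- by apply: (measurable_softmax_acceptance_le _ _ z1 z2); exact: measurable_affine_form.
move=> g /negP; rewrite -ltNge => below.
apply: softmax_acceptance_point_mass_le => //.
by move: below; rewrite /c1 /c2 /D; lra.
Qed.
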